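(* Let $\mathbb G$ be a homogeneous Lie group, $\delta>0$ and $P\in\bar{\operatorname T}_{<\delta}$. If for some $\varepsilon\in[0,1]$ one has $|(X^I\Pi_eP)(e)|\le\varepsilon^{\delta-d(I)}$ for all multi-indices $I\in\mathbb N^d$ with $d(I)<\delta$, then $|P|_a\lesssim_{\delta,\mathbb G}\varepsilon^{\delta-a}$ for all $a\le\delta$.
   Context: $\mathbb{G}$ is a connected, simply connected Lie group with Lie algebra $\mathfrak g$ (identified with left-invariant vector fields) equipped with dilations $D_r=\exp(\log r\,\mathfrak s)$ (Lie algebra automorphisms, $\mathfrak s$ diagonalisable with smallest eigenvalue $1$); basis $X_1,\dots,X_d$ with $\mathfrak sX_j=\mathfrak s_jX_j$; coordinates $\eta_j=\zeta_j\circ\exp^{-1}$ ($\zeta_j$ the dual basis); for $I\in\mathbb N^d$, $\eta^I=\prod\eta_j^{i_j}$, $d(I)=\sum\mathfrak s_ji_j$, $X^I=X_1^{i_1}\cdots X_d^{i_d}$. $\bar{\operatorname T}$ is the vector space with basis the abstract monomials $\pmb\eta^I$, $I\in\mathbb N^d$, graded by $\bar{\operatorname T}_a=\mathrm{span}\{\pmb\eta^I:d(I)=a\}$, each $\bar{\operatorname T}_a$ equipped with a fixed norm; for $P\in\bar{\operatorname T}$, $|P|_a$ is the norm of its $\bar{\operatorname T}_a$-component, and $\bar{\operatorname T}_{<\delta}=\bigoplus_{a<\delta}\bar{\operatorname T}_a$. $\Pi_e$ is the linear map sending $\pmb\eta^I$ to the function $\eta^I$ on $\mathbb G$. *)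

From HB Require Import structures.
From mathcomp Require Import all_boot all_order all_algebra.
From mathcomp Require Import all_classical all_reals all_analysis.
From mathcomp Require mpoly.
Set Implicit Arguments. Unset Strict Implicit. Unset Printing Implicit Defensive.
Import Order.TTheory GRing.Theory Num.Theory.
Local Open Scope classical_set_scope.
Local Open Scope ring_scope.

(* A homogeneous Lie group, written in exponential coordinates
   eta_j = zeta_j o exp^{-1} w.r.t. an eigenbasis X_1..X_d of the dilation
   generator s (s X_j = s_j X_j).  The point x of G is identified with the
   row vector (eta_1(x),...,eta_d(x)); the identity e is 0 and
   exp(t X) = t * X in these coordinates. *)
Record homgroup (R : realType) (d : nat) := HomGroup {
  hg_mul : 'rV[R]_d -> 'rV[R]_d -> 'rV[R]_d;
  hg_s : 'I_d -> R;   (* eigenvalues s_j of the dilation generator *)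
  hg_poly : forall j : 'I_d, exists p : mpoly.mpoly (d + d) R,
      forall x y, hg_mul x y ord0 j = mpoly.meval (fun k => row_mx x y ord0 k) p;
  hg_assoc : forall x y z, hg_mul x (hg_mul y z) = hg_mul (hg_mul x y) z;
  hg_unit_l : forall x, hg_mul 0 x = x;
  hg_unit_r : forall x, hg_mul x 0 = x;
  (* exponential coordinates: t |-> t x is the one-parameter subgroup exp(tX) *)
  hg_exp : forall x (s t : R), hg_mul (s *: x) (t *: x) = (s + t) *: x;
  hg_dil : forall (r : R), 0 < r -> forall x y,
      let D := fun z : 'rV[R]_d => \row_j (powR r (hg_s j) * z ord0 j) in
      D (hg_mul x y) = hg_mul (D x) (D y);
  hg_s_ge1 : forall j, 1 <= hg_s j;
  hg_s_min : exists j, hg_s j = 1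
}.

Definition mi (d : nat) := {ffun 'I_d -> nat}.

Section Defs.
Variables (R : realType) (d : nat) (G : homgroup R d).

Definition hdeg (I : mi d) : R := \sum_(j < d) hg_s G j * (I j)%:R.

(* unit vector: coordinates of exp(X_j) *)
Definition ev (j : 'I_d) : 'rV[R]_d := \row_k (k == j)%:R.

Definition Xf (j : 'I_d) (f : 'rV[R]_d -> R) : 'rV[R]_d -> R :=
  fun x => derive1 (fun t : R => f (hg_mul G x (t *: ev j))) 0.

Definition XI (I : mi d) (f : 'rV[R]_d -> R) : 'rV[R]_d -> R :=
  foldr (fun j g => iter (I j) (Xf j) g) f (enum 'I_d).

(* An element P of bar T is a finitely supported coefficient family
   (coefficient of the abstract monomial eta^I).  P in bar T_{<delta}
   means its support is contained in {I | d(I) < delta}. *)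
Definition in_Tlt (delta : R) (P : mi d -> R) : Prop :=
  forall I, P I != 0 -> hdeg I < delta.

Definition eta_mon (I : mi d) (x : 'rV[R]_d) : R := \prod_(j < d) x ord0 j ^+ I j.

Definition Pi_e (P : mi d -> R) (x : 'rV[R]_d) : R :=
  \sum_(I \in [set I : mi d | P I != 0]) P I * eta_mon I x.

Definition Tcomp (a : R) (P : mi d -> R) : mi d -> R :=
  fun I => if hdeg I == a then P I else 0.

(* n is a norm on the (finite-dimensional) space bar T_a, viewed as the
   coefficient families supported in {I | d(I) = a} *)
Definition grade_norm (a : R) (n : (mi d -> R) -> R) : Prop :=
  let Ta := fun f : mi d -> R => forall I, hdeg I != a -> f I = 0 in
  (forall f g, Ta f -> Ta g -> n (fun I => f I + g I) <= n f + n g) /\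
  (forall (c : R) f, Ta f -> n (fun I => c * f I) = `|c| * n f) /\
  (forall f, Ta f -> n f = 0 -> forall I, f I = 0).

End Defs.

From HB Require Import structures.
From mathcomp Require Import all_boot all_order all_algebra.
From mathcomp Require Import mpoly.
From mathcomp Require Import all_classical all_reals all_analysis.
From mathcomp Require Import ring lra.
Set Implicit Arguments. Unset Strict Implicit. Unset Printing Implicit Defensive.
Import Order.TTheory GRing.Theory Num.Theory.
Local Open Scope ring_scope.

(* In exponential coordinates the left-invariant field X_j acts on polynomials
   as d/dx_j + sum_k b_jk d/dx_k with b_jk(e) = 0.  Hence M_IJ := (X^I eta^J)(e)
   vanishes when |J| > |I| and equals I! [I = J] when |J| = |I|, where |.| is the
   ordinary degree; by dilation invariance it also vanishes unless d(I) = d(J).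
   So (X^I Pi_e P)(e) = sum_J M_IJ P_J is a triangular system in the ordinary
   degree, and induction on |I| gives |P_I| <= (1 + B)^(|I|+1) eps^(delta - d(I)),
   where B is the sum of the |M_IJ| over the finitely many I, J with d < delta.
   The triangle inequality in T_a then bounds the T_a-component of P. *)

Lemma is_derive_mulr (R : realType) (x a : R) : is_derive x (1 : R) (fun t => a * t) a.
Proof.
have h := is_deriveZ a (is_derive_id x (1 : R)).
by apply: (is_derive_eq h); rewrite [LHS]mulr1.
Qed.

Lemma powRD_pos (R : realType) (r a b : R) : 0 < r -> powR r (a + b) = powR r a * powR r b.
Proof. by move=> r0; rewrite powRD // (gt_eqF r0) implybT. Qed.

Lemma hdeg_ge_coord (R : realType) d (G : homgroup R d) (I : mi d) j : (I j)%:R <= hdeg G I.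
Proof.
have s_ge0 k : 0 <= hg_s G k by exact: le_trans (hg_s_ge1 G k).
rewrite /hdeg (bigD1 j) //= -[X in X <= _]addr0; apply: lerD.
  by rewrite ler_peMl // hg_s_ge1.
by apply: sumr_ge0 => k _; rewrite mulr_ge0.
Qed.

Section ChainRule.
Variables (R : realType) (n : nat).
Implicit Types (p q : {mpoly R[n]}) (v : R -> 'I_n -> R) (dv : 'I_n -> R).

Let chain_rule p := forall v dv t0, (forall i, is_derive t0 (1 : R) (v^~ i) (dv i)) ->
  is_derive t0 (1 : R) (fun t => p.@[v t]) (\sum_i (mderiv i p).@[v t0] * dv i).

Let chain_ruleC c : chain_rule c%:MP.
Proof.
move=> v dv t0 _; under eq_bigr do rewrite mderivC meval0 mul0r.
rewrite big1 //; under eq_fun do rewrite mevalC.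
exact: is_derive_cst.
Qed.

Let chain_ruleX j : chain_rule 'X_j.
Proof.
move=> v dv t0 hv; under eq_fun do rewrite mevalXU.
rewrite (bigD1 j) //= big1 => [|i /negPf ij]; last first.
  by rewrite mderivX mnm1E eq_sym ij mevalZ !mul0r.
rewrite addr0 mderivX mnm1E eqxx mevalZ mevalX big1 ?mulr1 ?mul1r //.
by move=> i _; rewrite mnmBE subnn expr0.
Qed.

Let chain_ruleD p q : chain_rule p -> chain_rule q -> chain_rule (p + q).
Proof.
move=> hp hq v dv t0 hv; under eq_fun do rewrite mevalD.
under eq_bigr do rewrite mderivD mevalD mulrDl.
by rewrite big_split; exact: is_deriveD (hp _ _ _ hv) (hq _ _ _ hv).
Qed.

Let chain_ruleM p q : chain_rule p -> chain_rule q -> chain_rule (p * q).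
Proof.
move=> hp hq v dv t0 hv; under eq_fun do rewrite mevalM.
apply: is_derive_eq; first exact: is_deriveM (hp _ _ _ hv) (hq _ _ _ hv).
rewrite !scaler_sumr -big_split; apply: eq_bigr => i _.
rewrite mderivM mevalD !mevalM /GRing.scale /=; ring.
Qed.

Lemma is_derive_meval p v dv t0 : (forall i, is_derive t0 (1 : R) (v^~ i) (dv i)) ->
  is_derive t0 (1 : R) (fun t => p.@[v t]) (\sum_i (mderiv i p).@[v t0] * dv i).
Proof.
elim/mpolyind: p v dv t0 => [|c m p _ _ hp]; first by rewrite -mpolyC0; exact: chain_ruleC.
apply: chain_ruleD hp; rewrite -mul_mpolyC mpolyXE_id.
apply: chain_ruleM (chain_ruleC c) _; apply: (big_ind chain_rule) => [||i _].
- by rewrite -mpolyC1; exact: chain_ruleC.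
- exact: chain_ruleM.
elim: (m i) => [|k ih]; first by rewrite expr0 -mpolyC1; exact: chain_ruleC.
by rewrite exprS; exact: chain_ruleM (chain_ruleX i) ih.
Qed.

End ChainRule.

Lemma subm_eq0_mdeg n (m1 m2 : 'X_{1..n}) :
  mdeg m1 = mdeg m2 -> ((m1 - m2)%MM == 0%MM) = (m1 == m2).
Proof.
move=> e; apply/eqP/eqP => [m12|->]; last by apply/mnmP => i; rewrite mnmBE subnn mnm0E.
have le12 : (m1 <= m2)%MM by apply/mnm_lepP => i; rewrite -subn_eq0 -mnmBE m12 mnm0E.
have := congr1 mdeg (submK le12); rewrite mdegD e -{2}[mdeg m2]add0n => /addIn/eqP.
by rewrite mdeg_eq0 => /eqP m21; rewrite -(submK le12) m21 add0m.
Qed.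

Section VanishingOrder.
Variables (R : comNzRingType) (n : nat).
Implicit Types p q : {mpoly R[n]}.

Definition vanishes_to (k : nat) p := forall m : 'X_{1..n}, (mdeg m < k)%N -> p@_m = 0.

Lemma vanishes_toD k p q : vanishes_to k p -> vanishes_to k q -> vanishes_to k (p + q).
Proof. by move=> hp hq m lt; rewrite mcoeffD hp ?hq ?addr0. Qed.

Lemma vanishes_to_sum k (I : Type) (s : seq I) (F : I -> {mpoly R[n]}) :
  (forall i, vanishes_to k (F i)) -> vanishes_to k (\sum_(i <- s) F i).
Proof.
move=> hF; elim: s => [|i s ih]; first by rewrite big_nil => m _; rewrite mcoeff0.
by rewrite big_cons; exact: vanishes_toD.
Qed.

Lemma vanishes_toM a b p q :
  vanishes_to a p -> vanishes_to b q -> vanishes_to (a + b) (p * q).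
Proof.
move=> hp hq m lt; rewrite mcoeffM big1 // => k /eqP e.
have : (mdeg k.1 + mdeg k.2 < a + b)%N by rewrite -mdegD -e.
have [h1 h|h1 h] := ltnP (mdeg k.1) a; first by rewrite hp ?mul0r.
by rewrite hq ?mulr0 // -(ltn_add2l (mdeg k.1)) (leq_trans h) ?leq_add2r.
Qed.

Lemma vanishes_to_mderiv k i p : vanishes_to k p -> vanishes_to k.-1 (mderiv i p).
Proof.
move=> hp m lt; rewrite mcoeff_mderiv hp ?mul0rn //.
by rewrite mdegD mdeg1 addn1; case: k hp lt.
Qed.

Lemma vanishes_toX (m : 'X_{1..n}) : vanishes_to (mdeg m) 'X_[m].
Proof. by move=> m' lt; rewrite mcoeffX; case: eqP lt => // ->; rewrite ltnn. Qed.

Lemma vanishes_to1_subC p : vanishes_to 1 (p - (p@_0%MM)%:MP).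
Proof.
move=> m; rewrite ltnS leqn0 mdeg_eq0 => /eqP ->.
by rewrite mcoeffB mcoeffC eqxx mulr1 subrr.
Qed.

Lemma meval_at0 p : p.@[fun _ => 0] = p@_0%MM.
Proof.
elim/mpolyind: p => [|c m p _ _ ih]; first by rewrite meval0 mcoeff0.
rewrite mevalD mcoeffD ih mevalZ mcoeffZ mevalX mcoeffX; congr (_ * _ + _).
have [->|nz] := eqVneq m 0%MM; first by rewrite big1 // => i _; rewrite mnm0E.
have [i mi] : exists i, m i != 0%N.
  apply/existsP; rewrite -negb_forall; apply: contra nz => /forallP m0.
  by apply/eqP/mnmP => i; rewrite mnm0E; exact/eqP/m0.
by rewrite (bigD1 i) //= expr0n (negPf mi) mul0r.
Qed.

End VanishingOrder.

Arguments vanishes_toX {R n} m.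

Section LeftInvariantFields.
Variables (R : realType) (d : nat) (G : homgroup R d) (q : 'I_d -> {mpoly R[d + d]}).
Hypothesis mul_meval : forall k x y, hg_mul G x y ord0 k = (q k).@[fun i => row_mx x y ord0 i].
Implicit Types (p : {mpoly R[d]}) (x y : 'rV[R]_d) (j k : 'I_d).

Definition peval p x : R := p.@[fun k => x ord0 k].

Lemma peval0 p : peval p 0 = p@_0%MM.
Proof. by rewrite -meval_at0; apply: meval_eq => k; rewrite mxE. Qed.

Definition at_y0 : (d + d).-tuple {mpoly R[d]} :=
  [tuple if fintype.split i is inl a then 'X_a else 0 | i < d + d].

Lemma peval_at_y0 (p : {mpoly R[d + d]}) x :
  peval (p \mPo at_y0) x = p.@[fun i => row_mx x 0 ord0 i].
Proof.
rewrite /peval comp_mpoly_meval; apply: meval_eq => i.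
rewrite tnth_mktuple -(splitK i); case: (fintype.split i) => a; rewrite unsplitK /=.
- by rewrite mevalXU row_mxEl.
- by rewrite meval0 row_mxEr mxE.
Qed.

(* [field_coef j k] is d(x.y)_k/dy_j at y = 0, the coefficient of d/dx_k in X_j. *)
Definition field_coef j k := mderiv (rshift d j) (q k) \mPo at_y0.

Lemma is_derive_mul_line x j k c :
  is_derive (0 : R) (1 : R) (fun t => hg_mul G x ((c * t) *: ev R j) ord0 k)
    (c * peval (field_coef j k) x).
Proof.
under eq_fun do rewrite mul_meval.
pose dv (i : 'I_(d + d)) := c * row_mx 0 (ev R j) ord0 i.
apply: is_derive_eq.
  apply: (is_derive_meval _ (dv := dv)) => i.
  rewrite /dv -(splitK i); case: (fintype.split i) => a /=.
  - under eq_fun do rewrite row_mxEl.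
    by rewrite row_mxEl mxE mulr0; exact: is_derive_cst.
  - under eq_fun do rewrite row_mxEr mxE mulrAC.
    by rewrite row_mxEr; exact: is_derive_mulr.
rewrite big_split_ord /= big1 => [|a _]; last by rewrite /dv row_mxEl mxE !mulr0.
rewrite add0r (bigD1 j) //= big1 => [|a /negPf aj]; last by rewrite /dv row_mxEr mxE aj !mulr0.
by rewrite addr0 /dv row_mxEr mxE eqxx mulr1 mulrC peval_at_y0 mulr0 scale0r.
Qed.

Definition Xpoly j p := \sum_k field_coef j k * mderiv k p.

Lemma is_derive_peval_line p y j c :
  is_derive (0 : R) (1 : R) (fun t => peval p (hg_mul G y ((c * t) *: ev R j)))
    (c * peval (Xpoly j p) y).
Proof.
apply: is_derive_eq; first exact: is_derive_meval (fun k => is_derive_mul_line y j k c).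
rewrite /Xpoly /peval raddf_sum /= mulr_sumr; apply: eq_bigr => k _.
by rewrite mulr0 scale0r hg_unit_r mevalM; ring.
Qed.

Lemma Xf_peval j p : Xf G j (peval p) = peval (Xpoly j p).
Proof.
apply/funext => x; rewrite /Xf derive1E.
have := is_derive_peval_line p x j 1; rewrite mul1r.
under eq_fun do rewrite mul1r.
by move=> h; rewrite derive_val.
Qed.

Definition XIpoly (I : mi d) p := foldr (fun j g => iter (I j) (Xpoly j) g) p (enum 'I_d).

Lemma XI_peval I p : XI G I (peval p) = peval (XIpoly I p).
Proof.
rewrite /XI /XIpoly; elim: (enum 'I_d) => //= j s ->.
by elim: (I j) => //= k ->; rewrite Xf_peval.
Qed.

Lemma field_coef0 j k : (field_coef j k)@_0%MM = (k == j)%:R.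
Proof.
have h := is_derive_mul_line 0 j k 1.
have e : (fun t => hg_mul G 0 ((1 * t) *: ev R j) ord0 k) = (fun t => (k == j)%:R * t).
  by apply/funext => t; rewrite hg_unit_l !mxE mul1r mulrC.
rewrite e mul1r in h.
rewrite -peval0 -(derive_val (is_derive := h)).
exact: (derive_val (is_derive := is_derive_mulr 0 _)).
Qed.

Lemma Xpoly_split j p :
  Xpoly j p = mderiv j p + \sum_k (field_coef j k - (k == j)%:R%:MP) * mderiv k p.
Proof.
have -> : Xpoly j p = \sum_k ((field_coef j k - (k == j)%:R%:MP) * mderiv k p
                               + (k == j)%:R%:MP * mderiv k p).
  by apply: eq_bigr => k _; rewrite -mulrDl subrK.
rewrite big_split addrC /=; congr (_ + _).
rewrite (bigD1 j) //= eqxx mpolyC1 mul1r big1 ?addr0 // => k /negPf ->.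
by rewrite mpolyC0 mul0r.
Qed.

Lemma vanishes_to_foldr_Xpoly n p (L : seq 'I_d) :
  vanishes_to n p -> vanishes_to (n - size L) (foldr Xpoly p L).
Proof.
move=> hp; elim: L => [|j L ih] /=; first by rewrite subn0.
apply: vanishes_to_sum => k; rewrite -[(n - _)%N]add0n.
apply: vanishes_toM => [m //|]; rewrite subnS; exact: vanishes_to_mderiv.
Qed.

Lemma vanishes_to_foldr_Xpoly_mderiv n p (L : seq 'I_d) :
  vanishes_to n p -> (size L <= n)%N ->
  vanishes_to (n - size L).+1 (foldr Xpoly p L - foldr (@mderiv _ _) p L).
Proof.
move=> hp; elim: L => [|j L ih] /= hL; first by rewrite subrr => m _; rewrite mcoeff0.
have nL : ((n - (size L).+1).+1 = n - size L)%N by rewrite subnS prednK // subn_gt0.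
rewrite Xpoly_split addrAC -mderivB nL; apply: vanishes_toD.
  by rewrite -[(n - size L)%N]/((n - size L).+1.-1); apply/vanishes_to_mderiv/ih/ltnW.
apply: vanishes_to_sum => k; rewrite -nL -add1n subnS.
apply: vanishes_toM; first by rewrite -field_coef0; exact: vanishes_to1_subC.
exact/vanishes_to_mderiv/vanishes_to_foldr_Xpoly.
Qed.

Definition mono (I : mi d) : 'X_{1..d} := [multinom I i | i < d].

Lemma mono_inj : injective mono.
Proof. by move=> I J /mnmP e; apply/ffunP => i; have := e i; rewrite !mnmE. Qed.

Definition mi_word (I : mi d) : seq 'I_d := flatten [seq nseq (I j) j | j <- enum 'I_d].

Lemma XIpoly_word I p : XIpoly I p = foldr Xpoly p (mi_word I).
Proof.
rewrite /XIpoly /mi_word; elim: (enum 'I_d) => //= j s ih.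
by rewrite foldr_cat ih; elim: (I j) => //= k ->.
Qed.

Lemma mderivm_word I p : mderivm (mono I) p = foldr (@mderiv _ _) p (mi_word I).
Proof.
rewrite mderivm_foldr /mi_word; congr (foldr _ _ (flatten _)).
by apply: eq_map => i; rewrite mnmE.
Qed.

Lemma size_mi_word I : size (mi_word I) = mdeg (mono I).
Proof.
rewrite /mi_word size_flatten /shape -map_comp mdegE sumnE big_map big_enum /=.
by apply: eq_bigr => i _; rewrite size_nseq mnmE.
Qed.

Definition XImono0 (I J : mi d) : R := (XIpoly I 'X_[mono J])@_0%MM.

Lemma XImono0_mdeg_lt I J : (mdeg (mono I) < mdeg (mono J))%N -> XImono0 I J = 0.
Proof.
move=> lt; rewrite /XImono0 XIpoly_word.
apply: (vanishes_to_foldr_Xpoly (L := mi_word I) (vanishes_toX (mono J))).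
by rewrite mdeg0 size_mi_word subn_gt0.
Qed.

Lemma XImono0_mdeg_eq I J : mdeg (mono I) = mdeg (mono J) ->
  XImono0 I J = (I == J)%:R * (\prod_i (I i)`!)%:R.
Proof.
move=> e; rewrite /XImono0 XIpoly_word.
have /(_ 0%MM) := vanishes_to_foldr_Xpoly_mderiv (vanishes_toX (mono J))
  (eq_leq (etrans (size_mi_word I) e)).
rewrite mdeg0 mcoeffB => /(_ isT)/eqP; rewrite subr_eq0 => /eqP ->.
rewrite -mderivm_word mderivmX mcoeffZ mcoeffX subm_eq0_mdeg // (inj_eq mono_inj).
have [->|_] := eqVneq J I; last by rewrite mulr0 mul0r.
by rewrite mulr1 mul1r; congr _%:R; apply: eq_bigr => i _; rewrite mnmE ffactnn.
Qed.

Definition dil (r : R) x : 'rV[R]_d := \row_j (powR r (hg_s G j) * x ord0 j).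

Lemma dil_ev r t j : dil r (t *: ev R j) = (powR r (hg_s G j) * t) *: ev R j.
Proof.
apply/rowP => k; rewrite !mxE.
by have [->|_] := eqVneq k j; rewrite ?mulr1 ?mulr0.
Qed.

Lemma dil0 r : dil r 0 = 0.
Proof. by apply/rowP => k; rewrite !mxE mulr0. Qed.

Lemma dil1 x : dil 1 x = x.
Proof. by apply/rowP => k; rewrite mxE powR1 mul1r. Qed.

Lemma Xf_peval_dil r j c p : 0 < r ->
  Xf G j (fun y => c * peval p (dil r y)) =
  (fun y => c * powR r (hg_s G j) * peval (Xpoly j p) (dil r y)).
Proof.
move=> r0; apply/funext => x; rewrite /Xf derive1E.
have -> : (fun t => c * peval p (dil r (hg_mul G x (t *: ev R j)))) =
    c \*: (fun t => peval p (hg_mul G (dil r x) ((powR r (hg_s G j) * t) *: ev R j))).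
  by apply/funext => t /=; rewrite -dil_ev -(hg_dil G r0).
have h := is_deriveZ c (is_derive_peval_line p (dil r x) j (powR r (hg_s G j))).
by rewrite derive_val /GRing.scale /= mulrA.
Qed.

Lemma iter_Xf_peval_dil r j n c p : 0 < r ->
  iter n (Xf G j) (fun y => c * peval p (dil r y)) =
  (fun y => c * powR r (hg_s G j * n%:R) * peval (iter n (Xpoly j) p) (dil r y)).
Proof.
move=> r0; elim: n => [|n ih] /=; first by apply/funext => y; rewrite mulr0 powRr0 mulr1.
rewrite ih Xf_peval_dil //; apply/funext => y; congr (_ * _).
by rewrite -mulrA -powRD_pos // -addn1 natrD mulrDr mulr1.
Qed.

Lemma XI_peval_dil r I c p : 0 < r ->
  XI G I (fun y => c * peval p (dil r y)) =
  (fun y => c * powR r (hdeg G I) * peval (XIpoly I p) (dil r y)).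
Proof.
move=> r0; rewrite /XI /XIpoly /hdeg -big_enum /=.
elim: (enum 'I_d) => [|j s ih] /=; first by rewrite big_nil powRr0 mulr1.
rewrite big_cons ih iter_Xf_peval_dil //; apply/funext => y; congr (_ * _).
by rewrite -mulrA -powRD_pos // addrC.
Qed.

Lemma peval_mono J : peval 'X_[mono J] = eta_mon J.
Proof. by apply/funext => x; rewrite /peval mevalX; apply: eq_bigr => i _; rewrite mnmE. Qed.

Lemma eta_mon_dil r J y : 0 < r -> eta_mon J (dil r y) = powR r (hdeg G J) * eta_mon J y.
Proof.
move=> r0; rewrite /eta_mon /hdeg.
under eq_bigr do rewrite mxE exprMn -powR_mulrn ?powR_ge0 // -powRrM.
rewrite big_split /=; congr (_ * _).
by apply: (big_ind2 (fun a b => a = powR r b)) => [|a1 a2 b1 b2 -> ->|//]; 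
  rewrite ?powRr0 ?powRD_pos.
Qed.

Lemma XImono0_hdeg I J : XImono0 I J != 0 -> hdeg G I = hdeg G J.
Proof.
(* Evaluate X^I (eta^J o D_2) at e using eta^J o D_2 = 2^d(J) eta^J. *)
move=> nz; have two_gt0 : (0 : R) < 2 by [].
have e := XI_peval_dil I 1 'X_[mono J] two_gt0.
have dil2 : (fun y => 1 * peval 'X_[mono J] (dil 2 y)) =
    (fun y => powR 2 (hdeg G J) * peval 'X_[mono J] (dil 1 y)).
  by apply/funext => y; rewrite mul1r dil1 peval_mono eta_mon_dil.
rewrite dil2 XI_peval_dil ?ltr01 // in e.
have := congr1 (fun f => f 0) e => /=.
rewrite !dil0 peval0 powR1 mulr1 mul1r => /(mulIf nz) e2.
have ln2 : ln (2 : R) != 0 by rewrite gt_eqF // ln_gt0 // ltr1n.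
by have := congr1 (@ln R) e2; rewrite !ln_powR => /(mulIf ln2).
Qed.

Lemma XImono0_off_diag I J : J != I -> XImono0 I J != 0 ->
  (mdeg (mono J) < mdeg (mono I))%N /\ hdeg G J = hdeg G I.
Proof.
move=> JI nz; split; last by rewrite (XImono0_hdeg nz).
case: (ltngtP (mdeg (mono J)) (mdeg (mono I))) => [//|lt|e]; move: nz.
- by rewrite XImono0_mdeg_lt ?eqxx.
- by rewrite XImono0_mdeg_eq // (eq_sym I) (negPf JI) mul0r eqxx.
Qed.

Lemma Xpoly_is_linear j : linear (Xpoly j).
Proof.
move=> a u v; rewrite /Xpoly scaler_sumr -big_split; apply: eq_bigr => k _.
by rewrite linearP mulrDr scalerAr.
Qed.

Lemma XIpoly_is_linear I : linear (XIpoly I).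
Proof.
move=> a u v; rewrite !XIpoly_word.
by elim: (mi_word I) => //= j L ->; exact: Xpoly_is_linear.
Qed.

HB.instance Definition _ I := GRing.isLinear.Build R {mpoly R[d]} {mpoly R[d]} *:%R
  (XIpoly I) (XIpoly_is_linear I).

Lemma Pi_e_peval P (s : seq (mi d)) : uniq s -> (forall J, P J != 0 -> J \in s) ->
  Pi_e P = peval (\sum_(J <- s) P J *: 'X_[mono J]).
Proof.
move=> us sP; apply/funext => x; rewrite /Pi_e (fsbig_widen _ [set` s]).
- rewrite -fsbig_seq // /peval raddf_sum /=; apply: eq_bigr => J _.
  by rewrite mevalZ -[_.@[_]]/(peval _ x) peval_mono.
- by move=> J /sP.
- by move=> J [_ /negP]; rewrite negbK => /eqP /= ->; rewrite mul0r.
Qed.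

Lemma XI_Pi_e0 I P (s : seq (mi d)) : uniq s -> (forall J, P J != 0 -> J \in s) ->
  XI G I (Pi_e P) 0 = \sum_(J <- s) P J * XImono0 I J.
Proof.
move=> us sP; rewrite (Pi_e_peval us sP) XI_peval peval0 linear_sum raddf_sum /=.
by apply: eq_bigr => J _; rewrite linearZ mcoeffZ.
Qed.

End LeftInvariantFields.

Definition mi_basis (R : realType) d (I : mi d) : mi d -> R := fun K => (K == I)%:R.

Section GradeNorm.
Variables (R : realType) (d : nat) (G : homgroup R d) (a : R) (n : (mi d -> R) -> R).
Hypothesis hn : grade_norm G a n.

Definition in_grade (f : mi d -> R) := forall I, hdeg G I != a -> f I = 0.

Lemma grade_normZ c f : in_grade f -> n (fun I => c * f I) = `|c| * n f.
Proof. by case: hn => _ [+ _]; apply. Qed.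

Lemma grade_normD f g : in_grade f -> in_grade g -> n (fun I => f I + g I) <= n f + n g.
Proof. by case: hn => + _; apply. Qed.

Lemma grade_norm0 : n (fun _ => 0) = 0.
Proof.
transitivity (n (fun _ => 0 * 0)); first by congr n; apply/funext => I; rewrite mulr0.
by rewrite (grade_normZ 0 (f := fun _ => 0)) // normr0 mul0r.
Qed.

Lemma grade_norm_ge0 f : in_grade f -> 0 <= n f.
Proof.
move=> hf; have hNf : in_grade (fun I => -1 * f I) by move=> I /hf ->; rewrite mulr0.
have := grade_normD hf hNf; rewrite grade_normZ // normrN normr1 mul1r.
have -> : (fun I => f I + -1 * f I) = (fun _ => 0) by apply/funext => I; rewrite mulN1r subrr.
by rewrite grade_norm0; lra.
Qed.

Lemma grade_norm_sum (T : Type) (s : seq T) (g : T -> mi d -> R) :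
  (forall i, in_grade (g i)) -> n (fun K => \sum_(i <- s) g i K) <= \sum_(i <- s) n (g i).
Proof.
move=> hg; elim: s => [|i s ih].
  by rewrite big_nil; under eq_fun do rewrite big_nil; rewrite grade_norm0.
have -> : (fun K => \sum_(j <- i :: s) g j K) = (fun K => g i K + \sum_(j <- s) g j K).
  by apply/funext => K; rewrite big_cons.
rewrite big_cons; apply: le_trans (grade_normD (hg i) _) _; last by rewrite lerD2l.
by move=> K hK /=; rewrite big1 // => j _; exact: hg.
Qed.

Lemma in_grade_mi_basis I : hdeg G I = a -> in_grade (mi_basis R I).
Proof.
move=> hI K hK; rewrite /mi_basis; have [KI|//] := eqVneq K I.
by rewrite KI hI eqxx in hK.
Qed.

Lemma grade_norm_le_coef f (s : seq (mi d)) :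
  in_grade f -> (forall K, f K != 0 -> K \in s) -> uniq s ->
  n f <= \sum_(I <- s) `|f I| * n (mi_basis R I).
Proof.
move=> fa fs us.
have f_sum : f = fun K => \sum_(I <- s) f I * mi_basis R I K.
  apply/funext => K; rewrite /mi_basis; have [Ks|Ks] := boolP (K \in s).
    rewrite (bigD1_seq K) //= eqxx mulr1 big1 ?addr0 // => I IK.
    by rewrite eq_sym (negPf IK) mulr0.
  have -> : f K = 0 by apply/eqP; apply: contraNT Ks; exact: fs.
  rewrite big1_seq // => I /andP[_ Is]; suff /negPf-> : K != I by rewrite mulr0.
  by apply: contraNneq Ks => ->.
rewrite {1}f_sum; apply: le_trans (grade_norm_sum _ _) _ => [I K hK|].
  by rewrite /mi_basis; have [KI|] := eqVneq K I; rewrite ?mulr0 // -KI fa ?mul0r.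
apply: ler_sum => I _; have [hI|hI] := eqVneq (hdeg G I) a.
  by rewrite grade_normZ //; apply: in_grade_mi_basis.
rewrite fa // normr0 mul0r; under eq_fun do rewrite mul0r.
by rewrite grade_norm0.
Qed.

End GradeNorm.

Section Estimate.
Variables (R : realType) (d : nat) (G : homgroup R d) (q : 'I_d -> {mpoly R[d + d]}).
Hypothesis mul_meval : forall k x y, hg_mul G x y ord0 k = (q k).@[fun i => row_mx x y ord0 i].
Variables (delta : R) (N : R -> (mi d -> R) -> R).
Hypothesis hN : forall a, grade_norm G a (N a).
Hypothesis delta_gt0 : 0 < delta.

Definition box : seq (mi d) :=
  undup [seq [ffun j => nat_of_ord (f j)] | f : {ffun 'I_d -> 'I_(Num.bound delta)}].

Lemma box_uniq : uniq box.
Proof. exact: undup_uniq. Qed.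

Lemma mem_box I : hdeg G I < delta -> I \in box.
Proof.
move=> hI; have lt_bound j : (I j < Num.bound delta)%N.
  rewrite -(ltr_nat R) (le_lt_trans (hdeg_ge_coord G I j)) // (lt_trans hI) //.
  exact/archi_boundP/ltW.
rewrite mem_undup; apply/mapP; exists [ffun j => Ordinal (lt_bound j)]; first by rewrite mem_enum.
by apply/ffunP => j; rewrite !ffunE.
Qed.

Definition XI_bound := \sum_(I <- box) \sum_(J <- box) `|XImono0 q I J|.

Definition estimate_cst :=
  \sum_(I <- box) (1 + XI_bound) ^+ (mdeg (mono I)).+1 * N (hdeg G I) (mi_basis R I).

Lemma XI_bound_ge0 : 0 <= XI_bound.
Proof. by apply: sumr_ge0 => I _; apply: sumr_ge0. Qed.

Section Coefficients.
Variables (P : mi d -> R) (eps : R).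
Hypothesis P_lt : in_Tlt G delta P.
Hypothesis XI_P : forall I, hdeg G I < delta ->
  `|XI G I (Pi_e P) 0| <= powR eps (delta - hdeg G I).

Local Notation B := XI_bound.
Local Notation pw I := (powR eps (delta - hdeg G I)).

Lemma supp_box J : P J != 0 -> J \in box.
Proof. by move/P_lt; exact: mem_box. Qed.

Lemma off_diag_bound n c I : I \in box -> 0 <= c -> (mdeg (mono I) <= n)%N ->
  (forall J, (mdeg (mono J) < n)%N -> `|P J| <= c * pw J) ->
  `|\sum_(J <- box | J != I) P J * XImono0 q I J| <= B * (c * pw I).
Proof.
move=> Ibox c_ge0 hI ih; apply: le_trans (ler_norm_sum _ _ _) _.
apply: (@le_trans _ _ (\sum_(J <- box | J != I) c * pw I * `|XImono0 q I J|)).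
  apply: ler_sum => J JI; rewrite normrM.
  have [->|nzM] := eqVneq (XImono0 q I J) 0; first by rewrite normr0 !mulr0.
  have [lt hd] := XImono0_off_diag mul_meval JI nzM.
  by rewrite ler_wpM2r // -hd ih // (leq_trans lt).
rewrite -mulr_sumr mulrC ler_wpM2r ?mulr_ge0 ?powR_ge0 //.
apply: (@le_trans _ _ (\sum_(J <- box) `|XImono0 q I J|)).
  by rewrite [X in _ <= X](bigD1_seq I) ?box_uniq //= lerDr.
rewrite /XI_bound [X in _ <= X](bigD1_seq I) ?box_uniq //= lerDl.
by apply: sumr_ge0 => i _; exact: sumr_ge0.
Qed.

Lemma coef_bound n I : (mdeg (mono I) < n)%N -> `|P I| <= (1 + B) ^+ n * pw I.
Proof.
have B1_ge0 : 0 <= 1 + B by rewrite addr_ge0 ?XI_bound_ge0.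
elim: n I => [//|n ih] I hI.
have [->|nzI] := eqVneq (P I) 0; first by rewrite normr0 mulr_ge0 ?exprn_ge0 ?powR_ge0.
have e := XI_Pi_e0 mul_meval I box_uniq supp_box.
rewrite (bigD1_seq I) ?box_uniq ?supp_box //= in e; set S := \sum_(J <- _ | _) _ in e.
have diag : 1 <= XImono0 q I I.
  rewrite (XImono0_mdeg_eq mul_meval) // eqxx mul1r ler1n prodn_gt0 // => i.
  exact: fact_gt0.
have PI_le : `|P I| <= `|XI G I (Pi_e P) 0| + `|S|.
  apply: le_trans (ler_normB _ S); rewrite e addrK normrM.
  by rewrite (ger0_norm (le_trans ler01 diag)) ler_peMr.
have -> : (1 + B) ^+ n.+1 * pw I = (1 + B) ^+ n * pw I + B * ((1 + B) ^+ n * pw I).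
  by rewrite exprS; ring.
apply: le_trans PI_le (lerD _ (off_diag_bound (supp_box nzI) _ hI ih)).
  apply: le_trans (XI_P (P_lt nzI)) _.
  by rewrite ler_peMl ?powR_ge0 // exprn_ege1 // lerDl XI_bound_ge0.
exact: exprn_ge0.
Qed.

Lemma Tcomp_bound a : N a (Tcomp G a P) <= estimate_cst * powR eps (delta - a).
Proof.
have Ta : in_grade G a (Tcomp G a P) by move=> I /negPf; rewrite /Tcomp => ->.
apply: le_trans (grade_norm_le_coef (hN a) Ta _ box_uniq) _ => [K|].
  by rewrite /Tcomp; case: ifP => _; [exact: supp_box | rewrite eqxx].
rewrite /estimate_cst mulr_suml; apply: ler_sum => I _; rewrite /Tcomp.
have N_ge0 : 0 <= N (hdeg G I) (mi_basis R I).
  by apply: (grade_norm_ge0 (hN _)); exact: in_grade_mi_basis.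
have [<-|_] := eqVneq (hdeg G I) a; last first.
  by rewrite normr0 mul0r !mulr_ge0 ?exprn_ge0 ?addr_ge0 ?XI_bound_ge0 ?powR_ge0.
by rewrite mulrAC ler_wpM2r //; exact: coef_bound.
Qed.

End Coefficients.

End Estimate.

Theorem lemma3p9 (R : realType) (d : nat) (G : homgroup R d) (delta : R)
  (N : R -> (mi d -> R) -> R) (hN : forall a, grade_norm G a (N a)) :
  0 < delta ->
  exists C : R, forall (P : mi d -> R) (eps : R),
    in_Tlt G delta P -> 0 <= eps <= 1 ->
    (forall I : mi d, hdeg G I < delta ->
       `| XI G I (Pi_e P) 0 | <= powR eps (delta - hdeg G I)) ->
    forall a : R, a <= delta -> N a (Tcomp G a P) <= C * powR eps (delta - a).
Proof.
move=> delta_gt0; have [q mul_meval] := boolp.choice (hg_poly G).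
exists (estimate_cst G q delta N) => P eps P_lt _ XI_P a _.
exact: Tcomp_bound.
Qed.
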